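(* Let $X\in\mathbb{R}^{n\times m}$ with $m>n$ be a full rank matrix. There exists a subset $\mathcal S\subset[m]$ of cardinality $m-1$ such that $X_{\mathcal S}$ is full rank and $$\|X_{\mathcal S}^{\dagger}\|_F^2 \le \frac{m-n+1}{m-n}\,\|X^{\dagger}\|_F^2 .$$
   Context: $[m]=\{1,\dots,m\}$; $X_{\mathcal S}$ is the submatrix of $X$ formed by the columns indexed by $\mathcal S$; $A^{\dagger}$ is the Moore–Penrose pseudo-inverse and $\|\cdot\|_F$ the Frobenius norm. *)

From mathcomp Require Import all_boot all_order all_algebra.
From mathcomp Require Import reals.
Set Implicit Arguments. Unset Strict Implicit. Unset Printing Implicit Defensive.
Import Order.TTheory GRing.Theory Num.Theory.
Local Open Scope ring_scope.

(* Y is the Moore--Penrose pseudo-inverse of A (the four Penrose conditions;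
   over the reals the adjoint is the transpose).  It exists and is unique. *)
Definition is_pinv (R : realType) (p q : nat) (A : 'M[R]_(p, q)) (Y : 'M[R]_(q, p)) : Prop :=
  [/\ A *m Y *m A = A, Y *m A *m Y = Y, (A *m Y)^T = A *m Y & (Y *m A)^T = Y *m A].

Definition frob2 (R : realType) (p q : nat) (A : 'M[R]_(p, q)) : R :=
  \sum_(i < p) \sum_(j < q) (A i j) ^+ 2.

(* X_S : columns of X indexed by S (in increasing order) *)
Definition colsubset (R : realType) (n m : nat) (X : 'M[R]_(n, m)) (S : {set 'I_m})
  : 'M[R]_(n, #|S|) := colsub (fun j : 'I_#|S| => enum_val j) X.

From mathcomp Require Import all_boot all_order all_algebra.
From mathcomp Require Import reals ring.
Set Implicit Arguments. Unset Strict Implicit. Unset Printing Implicit Defensive.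
Import Order.TTheory GRing.Theory Num.Theory.
Local Open Scope ring_scope.

(* Take Y = X^T (X X^T)^-1, so that X Y = 1 and P = Y X is the orthogonal
   projection onto the row space of X, of trace n.  The diagonals of 1 - P and
   of Y Y^T sum to m - n and to ||Y||^2, so some index j has
   (Y Y^T)_jj <= ||Y||^2 / (m - n) * (1 - P)_jj, and then (1 - P)_jj > 0.
   Subtracting (1 - P) e_j e_j^T Y / (1 - P)_jj from Y kills its j-th row and
   keeps X Y = 1; dropping that row yields the pseudo-inverse of X without
   column j.  Since Y^T (1 - P) = 0 the correction is Frobenius-orthogonal to
   Y, so the squared norm grows by exactly (Y Y^T)_jj / (1 - P)_jj. *)

Section Frobenius.
Variable R : realType.

Lemma frob2_tr p q (A : 'M[R]_(p, q)) : frob2 A = \tr (A *m A^T).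
Proof.
rewrite /frob2 /mxtrace; apply: eq_bigr => i _; rewrite mxE.
by apply: eq_bigr => k _; rewrite mxE expr2.
Qed.

Lemma frob2_ge0 p q (A : 'M[R]_(p, q)) : 0 <= frob2 A.
Proof. by apply: sumr_ge0 => i _; apply: sumr_ge0 => k _; apply: sqr_ge0. Qed.

Lemma frob2_eq0 p q (A : 'M[R]_(p, q)) : frob2 A = 0 -> A = 0.
Proof.
move=> A0; apply/matrixP => i k; rewrite mxE; apply/eqP; rewrite -sqrf_eq0.
have rows0 := psumr_eq0P (fun i _ => sumr_ge0 _ (fun k _ => sqr_ge0 (A i k))) A0.
by rewrite (psumr_eq0P (fun k _ => sqr_ge0 (A i k)) (rows0 i isT)).
Qed.

Lemma frob2D p q (A B : 'M[R]_(p, q)) :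
  frob2 (A + B) = frob2 A + 2 * \tr (A *m B^T) + frob2 B.
Proof.
rewrite !frob2_tr linearD /= mulmxDl !mulmxDr !mxtraceD.
rewrite -[\tr (B *m A^T)]mxtrace_tr trmx_mul trmxK; ring.
Qed.

Lemma frob2Z p q a (A : 'M[R]_(p, q)) : frob2 (a *: A) = a ^+ 2 * frob2 A.
Proof.
rewrite /frob2 mulr_sumr; apply: eq_bigr => i _; rewrite mulr_sumr.
by apply: eq_bigr => k _; rewrite mxE exprMn.
Qed.

Lemma frob2_mul_col_row p q (u : 'cV[R]_p) (v : 'rV[R]_q) :
  frob2 (u *m v) = frob2 u * frob2 v.
Proof.
rewrite /frob2 big_ord1 mulr_suml; apply: eq_bigr => i _.
rewrite big_ord1 mulr_sumr; apply: eq_bigr => k _.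
by rewrite mxE big_ord1 exprMn.
Qed.

Lemma frob2_row p q i (A : 'M[R]_(p, q)) : frob2 (row i A) = (A *m A^T) i i.
Proof.
rewrite frob2_tr /mxtrace big_ord1 !mxE.
by apply: eq_bigr => k _; rewrite !mxE.
Qed.

Lemma frob2_col p q j (A : 'M[R]_(p, q)) : frob2 (col j A) = (A^T *m A) j j.
Proof.
rewrite /frob2 [RHS]mxE; apply: eq_bigr => i _.
by rewrite big_ord1 !mxE expr2.
Qed.

End Frobenius.

Section RowFreePinv.
Variables (R : realType) (p q : nat) (A : 'M[R]_(p, q)).
Hypothesis freeA : row_free A.

Lemma row_free_gram_unit : A *m A^T \in unitmx.
Proof.
rewrite -row_free_unit -kermx_eq0; apply/eqP.
have kerA : kermx (A *m A^T) *m A = 0.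
  apply: frob2_eq0; rewrite frob2_tr trmx_mul mulmxA -(mulmxA _ A) mulmx_ker.
  by rewrite mul0mx linear0.
by apply: (row_free_inj freeA); rewrite kerA mul0mx.
Qed.

Lemma row_free_pinv_exists :
  exists Y : 'M[R]_(q, p), A *m Y = 1%:M /\ (Y *m A)^T = Y *m A.
Proof.
exists (A^T *m invmx (A *m A^T)); split; first by rewrite mulmxA mulmxV ?row_free_gram_unit.
by rewrite !trmx_mul trmx_inv trmx_mul !trmxK mulmxA.
Qed.

Lemma row_free_pinvE (Y Z : 'M[R]_(q, p)) :
  is_pinv A Y -> A *m Z = 1%:M -> (Z *m A)^T = Z *m A -> Y = Z.
Proof.
case=> AYA _ _ symYA AZ symZA.
have AY : A *m Y = 1%:M by apply: (row_free_inj freeA); rewrite AYA mul1mx.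
have YA_ZA : Y *m A = Z *m A.
  transitivity ((Z *m A) *m (Y *m A)).
    by rewrite -{1}symZA -symYA -trmx_mul mulmxA -(mulmxA Y) AZ mulmx1 symYA.
  by rewrite mulmxA -(mulmxA Z) AY mulmx1.
by rewrite -[Y]mulmx1 -AZ mulmxA YA_ZA -mulmxA AZ mulmx1.
Qed.

End RowFreePinv.

Lemma exists_ler_of_sum (R : realDomainType) m (a b : 'I_m -> R) :
  (0 < m)%N -> \sum_i b i <= \sum_i a i -> exists j, b j <= a j.
Proof.
move=> m_gt0 le_ba; apply/existsP; apply: contraLR le_ba => /existsPn lt_ab.
rewrite -ltNge; apply: ltr_sum => [|i _]; last by rewrite ltNge lt_ab.
by apply/hasP; exists (Ordinal m_gt0); rewrite ?mem_index_enum.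
Qed.

Section DeleteColumn.
Variables (R : realType) (n m : nat) (X : 'M[R]_(n, m)) (Y : 'M[R]_(m, n)).
Hypotheses (XY : X *m Y = 1%:M) (symYX : (Y *m X)^T = Y *m X).

Local Notation Q := (1%:M - Y *m X).

Lemma mulmx_compl_proj : X *m Q = 0.
Proof. by rewrite mulmxBr mulmx1 mulmxA XY mul1mx subrr. Qed.

Lemma compl_proj_sym : Q^T = Q.
Proof. by rewrite linearB /= trmx1 symYX. Qed.

Lemma compl_proj_mulmx : Q *m Y = 0.
Proof. by rewrite mulmxBl mul1mx -mulmxA XY mulmx1 subrr. Qed.

Lemma trmx_mulmx_compl_proj : Y^T *m Q = 0.
Proof. by rewrite -compl_proj_sym -trmx_mul compl_proj_mulmx trmx0. Qed.

Lemma compl_proj_idem : Q^T *m Q = Q.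
Proof.
by rewrite compl_proj_sym {1}mulmxBr mulmx1 mulmxA compl_proj_mulmx mul0mx subr0.
Qed.

Lemma mxtrace_compl_proj : \tr Q = m%:R - n%:R.
Proof. by rewrite linearB /= mxtrace1 mxtrace_mulC XY mxtrace1. Qed.

Lemma compl_proj_diag_ge0 j : 0 <= Q j j.
Proof. by have := frob2_ge0 (col j Q); rewrite frob2_col compl_proj_idem. Qed.

Lemma compl_proj_diag_eq1 j : (Y *m Y^T) j j = 0 -> Q j j = 1.
Proof.
rewrite -frob2_row => /frob2_eq0 /rowP Yj0.
rewrite !mxE eqxx big1 ?subr0 // => k _.
by have := Yj0 k; rewrite !mxE => ->; rewrite mul0r.
Qed.

Lemma exists_small_gram_diag : (n < m)%N ->
  exists j, 0 < Q j j /\ (Y *m Y^T) j j / Q j j <= frob2 Y / (m - n)%:R.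
Proof.
move=> lt_nm; set c := frob2 Y / (m - n)%:R.
have mn_gt0 : 0 < (m - n)%:R :> R by rewrite ltr0n subn_gt0.
have c_ge0 : 0 <= c by rewrite divr_ge0 ?frob2_ge0 ?ler0n.
have sum_Gii : \sum_i (Y *m Y^T) i i <= \sum_i c * Q i i.
  rewrite -mulr_sumr -[\sum_i Q i i]/(\tr Q) mxtrace_compl_proj.
  by rewrite -natrB ?(ltnW lt_nm) // divfK ?gt_eqF // frob2_tr.
have [j le_Gjj] := exists_ler_of_sum (leq_ltn_trans (leq0n n) lt_nm) sum_Gii.
have Qjj_gt0 : 0 < Q j j.
  rewrite lt_def compl_proj_diag_ge0 andbT; apply: contraTneq le_Gjj => Qjj0.
  rewrite Qjj0 mulr0 -ltNge lt_def -frob2_row frob2_ge0 andbT frob2_row.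
  by apply: contra_neq (@oner_neq0 R) => /compl_proj_diag_eq1 <-.
by exists j; rewrite ler_pdivrMr.
Qed.

Variable j : 'I_m.

Definition delcol_pinv : 'M[R]_(m, n) := Y - (Q j j)^-1 *: (col j Q *m row j Y).

Lemma mulmx_delcol_pinv : X *m delcol_pinv = 1%:M.
Proof.
rewrite mulmxBr XY -scalemxAr mulmxA colE mulmxA mulmx_compl_proj.
by rewrite !mul0mx scaler0 subr0.
Qed.

Hypothesis Qjj_neq0 : Q j j != 0.

Lemma delcol_pinv_row0 k : delcol_pinv j k = 0.
Proof.
rewrite !mxE big_ord1 !mxE mulrA mulVf ?mul1r ?subrr //.
by move: Qjj_neq0; rewrite !mxE.
Qed.

Lemma delcol_pinv_mulmx_sym a b : a != j -> b != j ->
  (delcol_pinv *m X) a b = (delcol_pinv *m X) b a.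
Proof.
move=> /negbTE aj /negbTE bj; rewrite mulmxBl -scalemxAl -mulmxA -row_mul.
move: (Y *m X) symYX => P symP.
have {}symP u v : P u v = P v u by rewrite -{1}symP mxE.
rewrite !mxE !big_ord1 !mxE aj bj !sub0r (symP a b) (symP j b) (symP j a).
by rewrite !mulNr (mulrC (P a j)).
Qed.

Lemma frob2_delcol_pinv :
  frob2 delcol_pinv = frob2 Y + (Y *m Y^T) j j / Q j j.
Proof.
have uY : (col j Q)^T *m Y = 0.
  have : Y^T *m col j Q = 0 by rewrite colE mulmxA trmx_mulmx_compl_proj mul0mx.
  by move/(congr1 trmx); rewrite trmx_mul trmxK trmx0.
have cross : \tr (Y *m (col j Q *m row j Y)^T) = 0.
  by rewrite trmx_mul mulmxA mxtrace_mulC mulmxA uY mul0mx linear0.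
rewrite /delcol_pinv -scaleNr frob2D linearZ /= -scalemxAr mxtraceZ cross.
rewrite frob2Z frob2_mul_col_row frob2_col frob2_row compl_proj_idem.
rewrite mulr0 mulr0 addr0 sqrrN expr2 -mulrA mulrCA mulKf //.
by rewrite mulrC.
Qed.

End DeleteColumn.

Section DropIndex.
Variables (R : realType) (m : nat) (j : 'I_m).

Local Notation S := [set~ j].
Local Notation enumS := (fun k : 'I_#|S| => enum_val k).

Lemma sum_enum_setC1 (F : 'I_m -> R) :
  \sum_(k < #|S|) F (enum_val k) = \sum_i F i - F j.
Proof.
rewrite -(big_enum_val F) [in RHS](bigD1 j) //= addrC addrK.
by apply: eq_bigl => i; rewrite in_setC1.
Qed.

Variables (n : nat) (Z : 'M[R]_(m, n)).
Hypothesis Zj0 : forall k, Z j k = 0.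

Lemma colsubset_setC1_mul (X : 'M[R]_(n, m)) :
  colsubset X S *m rowsub enumS Z = X *m Z.
Proof.
apply/matrixP => a b; rewrite mxE.
under eq_bigr do rewrite !mxE.
by rewrite (sum_enum_setC1 (fun i => X a i * Z i b)) Zj0 mulr0 subr0 mxE.
Qed.

Lemma frob2_rowsub_setC1 : frob2 (rowsub enumS Z) = frob2 Z.
Proof.
rewrite /frob2; under eq_bigr do under eq_bigr do rewrite mxE.
rewrite (sum_enum_setC1 (fun i => \sum_l Z i l ^+ 2)) [X in _ - X]big1 ?subr0 //.
by move=> l _; rewrite Zj0 expr0n.
Qed.

Lemma trmx_mxsub_setC1 (A : 'M[R]_m) :
  (forall a b, a != j -> b != j -> A a b = A b a) ->
  (mxsub enumS enumS A)^T = mxsub enumS enumS A.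
Proof.
move=> symA; apply/matrixP => a b; rewrite !mxE.
by apply: symA; rewrite -in_setC1 enum_valP.
Qed.

End DropIndex.

Theorem lemma3p2 (R : realType) (n m : nat) (X : 'M[R]_(n, m)) :
  (n < m)%N -> \rank X = minn n m ->
  exists S : {set 'I_m},
    [/\ #|S| = m.-1,
        \rank (colsubset X S) = minn n #|S| &
        forall (YS : 'M[R]_(#|S|, n)) (Y : 'M[R]_(m, n)),
          is_pinv (colsubset X S) YS -> is_pinv X Y ->
          frob2 YS <= (m - n + 1)%:R / (m - n)%:R * frob2 Y].
Proof.
move=> lt_nm rkX.
have freeX : row_free X by rewrite /row_free rkX (minn_idPl (ltnW lt_nm)).
have [Y0 [XY0 symY0X]] := row_free_pinv_exists freeX.
have [j [Qjj_gt0 le_Gjj]] := exists_small_gram_diag XY0 symY0X lt_nm.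
have Z0j := delcol_pinv_row0 (lt0r_neq0 Qjj_gt0).
set ZS := rowsub (fun k : 'I_#|[set~ j]| => enum_val k) (delcol_pinv X Y0 j).
have XZS : colsubset X [set~ j] *m ZS = 1%:M.
  by rewrite colsubset_setC1_mul // mulmx_delcol_pinv.
have symZSX : (ZS *m colsubset X [set~ j])^T = ZS *m colsubset X [set~ j].
  by rewrite -mxsub_mul trmx_mxsub_setC1 // => a b; apply: delcol_pinv_mulmx_sym.
have cardS : #|[set~ j]| = m.-1 by rewrite cardsC1 card_ord.
have freeXS : row_free (colsubset X [set~ j]) by apply/row_freeP; exists ZS.
exists [set~ j]; split => //.
  by rewrite (eqP freeXS) cardS; apply/esym/minn_idPl; case: (m) lt_nm.
move=> YS Y pinvYS pinvY.
rewrite (row_free_pinvE freeXS pinvYS XZS symZSX).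
rewrite (row_free_pinvE freeX pinvY XY0 symY0X) frob2_rowsub_setC1 //.
rewrite frob2_delcol_pinv ?lt0r_neq0 //.
rewrite (_ : _ * frob2 Y0 = frob2 Y0 + frob2 Y0 / (m - n)%:R) ?lerD2l //.
by rewrite natrD; field; rewrite pnatr_eq0 subn_eq0 -ltnNge.
Qed.
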